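(* Let $\mathcal{B}$ be a Borel-measurable partition of $\Omega$ with $\underline{P}(B)>0$ for all $B\in\mathcal{B}$, and let $A\in\mathscr{B}(\Omega)$. Suppose that one of the two rules (Dempster's rule, the Geometric rule) satisfies $\inf_{B\in\mathcal{B}}\underline{P}_\bullet(A\mid B)>\overline{P}(A)$ and the other satisfies $\sup_{B\in\mathcal{B}}\overline{P}_\bullet(A\mid B)<\underline{P}(A)$. Then $\mathcal{B}$ strictly dilates $A$ under the generalized Bayes rule, i.e. $\sup_{B\in\mathcal{B}}\underline{P}_{\mathfrak{B}}(A\mid B)<\underline{P}(A)\le\overline{P}(A)<\inf_{B\in\mathcal{B}}\overline{P}_{\mathfrak{B}}(A\mid B)$.
   Context: $\Omega$ is a separable, completely metrizable space with Borel $\sigma$-algebra $\mathscr{B}(\Omega)$; $\underline{P}$ is a Choquet capacity of order 2 on $\mathscr{B}(\Omega)$ (a coherent lower probability with weakly compact set of dominating measures satisfying $\underline{P}(A\cup B)\ge\underline{P}(A)+\underline{P}(B)-\underline{P}(A\cap B)$); $\Pi=\{P:P\ge\underline{P}\}$, $\underline{P}(A)=\inf_{P\in\Pi}P(A)$, $\overline{P}(A)=\sup_{P\in\Pi}P(A)=1-\underline{P}(A^c)$. Generalized Bayes rule: $\underline{P}_{\mathfrak{B}}(A\mid B)=\inf_{P\in\Pi}P(A\cap B)/P(B)$, $\overline{P}_{\mathfrak{B}}(A\mid B)=\sup_{P\in\Pi}P(A\cap B)/P(B)$. Dempster's rule: $\overline{P}_{\mathfrak{D}}(A\mid B)=\overline{P}(A\cap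 B)/\overline{P}(B)$, $\underline{P}_{\mathfrak{D}}(A\mid B)=1-\overline{P}_{\mathfrak{D}}(A^c\mid B)$. Geometric rule: $\underline{P}_{\mathfrak{G}}(A\mid B)=\underline{P}(A\cap B)/\underline{P}(B)$, $\overline{P}_{\mathfrak{G}}(A\mid B)=1-\underline{P}_{\mathfrak{G}}(A^c\mid B)$. In the paper's terminology, the first hypothesis is ''$\mathcal{B}$ incurs sure loss in $A$'' and the second ''sure gain''. *)

From HB Require Import structures.
From mathcomp Require Import all_boot all_order all_algebra.
From mathcomp Require Import all_classical all_reals all_analysis.
Set Implicit Arguments. Unset Strict Implicit. Unset Printing Implicit Defensive.
Import Order.TTheory GRing.Theory Num.Theory.
Import numFieldNormedType.Exports.
Local Open Scope classical_set_scope.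
Local Open Scope ring_scope.

Section Defs.
Variable R : realType.

Definition separable_space (T : topologicalType) : Prop :=
  exists D : set T, countable D /\ closure D = setT.

Definition completely_metrizable (T : topologicalType) : Prop :=
  exists d : T -> T -> R,
    [/\ (forall x y, 0 <= d x y),
        (forall x y, d x y = 0 <-> x = y),
        (forall x y, d x y = d y x) /\
        (forall x y z, d x z <= d x y + d y z),
        (forall U : set T, open U <->
            (forall x, U x -> exists2 e : R, 0 < e & [set y | d x y < e] `<=` U))
      & (forall u : nat -> T,
            (forall e : R, 0 < e -> exists N, forall m n, (N <= m)%N -> (N <= n)%N ->
               d (u m) (u n) < e) ->
            exists x, (fun n => d x (u n)) @ \oo --> (0 : R))].

Definition Borel (T : ptopologicalType) := g_sigma_algebraType (@open T).

Variable T : ptopologicalType.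
Local Notation Om := (Borel T).

Definition core (Plow : set Om -> R) : set (probability Om R) :=
  [set P | forall A : set Om, measurable A -> ((Plow A)%:E <= P A)%E].

Definition upper (Plow : set Om -> R) (A : set Om) : R := 1 - Plow (~` A).

(* weak compactness of a set of probability measures (weak topology induced
   by integrals of bounded continuous functions), via ultrafilters *)
Definition weakly_compact (S : set (probability Om R)) : Prop :=
  forall U : set_system (probability Om R), UltraFilter U -> U S ->
    exists2 P, S P &
      forall f : T -> R, continuous f -> (exists M : R, forall x, `|f x| <= M) ->
        (fun Q : probability Om R => (\int[Q]_x (f x)%:E)%E) @ U
          --> (\int[P]_x (f x)%:E)%E.

Definition choquet2 (Plow : set Om -> R) : Prop :=
  [/\ (forall A : set Om, measurable A ->
         (Plow A)%:E = ereal_inf [set P A | P in core Plow]),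
      weakly_compact (core Plow)
    & (forall A B : set Om, measurable A -> measurable B ->
         Plow A + Plow B - Plow (A `&` B) <= Plow (A `|` B))].

Definition lowerBayes (Plow : set Om -> R) (A B : set Om) : \bar R :=
  ereal_inf [set (fine (P (A `&` B)) / fine (P B))%:E | P in core Plow].
Definition upperBayes (Plow : set Om -> R) (A B : set Om) : \bar R :=
  ereal_sup [set (fine (P (A `&` B)) / fine (P B))%:E | P in core Plow].

Definition upperDempster (Plow : set Om -> R) (A B : set Om) : R :=
  upper Plow (A `&` B) / upper Plow B.
Definition lowerDempster (Plow : set Om -> R) (A B : set Om) : R :=
  1 - upperDempster Plow (~` A) B.

Definition lowerGeometric (Plow : set Om -> R) (A B : set Om) : R :=
  Plow (A `&` B) / Plow B.
Definition upperGeometric (Plow : set Om -> R) (A B : set Om) : R :=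
  1 - lowerGeometric Plow (~` A) B.

Definition measurable_partition (Bs : set (set Om)) : Prop :=
  [/\ (forall B, Bs B -> measurable B),
      (forall B C, Bs B -> Bs C -> B <> C -> B `&` C = set0)
    & \bigcup_(B in Bs) B = setT].

End Defs.

From HB Require Import structures.
From mathcomp Require Import all_boot all_order all_algebra.
From mathcomp Require Import all_classical all_reals all_analysis.
From mathcomp Require Import ring lra.
Set Implicit Arguments. Unset Strict Implicit. Unset Printing Implicit Defensive.
Import Order.TTheory GRing.Theory Num.Theory.
Local Open Scope classical_set_scope.
Local Open Scope ring_scope.

(* For every cell B of the partition the Bayes bounds enclose the Geometric
   and Dempster ones crosswise: lowerBayes <= upperGeometric, upperDempster
   and lowerGeometric, lowerDempster <= upperBayes.  For the Geometric bounds,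
   take P in the core with P(B) close to Plow(B): as P(A & B) >= Plow(A & B),
   P(A | B) is at least lowerGeometric up to an arbitrarily small error, and
   complementing A gives the upper bound.  The Dempster bounds are dual, with
   P(B) close to the upper probability of B.  Sup and inf over the partition
   then transfer the strict hypotheses to the Bayes rule. *)

Section ereal_image_bounds.
Variables (R : realType) (I : Type) (S : set I) (f g : I -> \bar R).
Hypothesis fg : forall i, S i -> (f i <= g i)%E.

Lemma ereal_sup_image_le : (ereal_sup (f @` S) <= ereal_sup (g @` S))%E.
Proof.
apply: ge_ereal_sup => _ [i Si <-].
by apply: le_ereal_sup_tmp; exists (g i); [exists i | exact: fg].
Qed.

Lemma ereal_inf_image_le : (ereal_inf (f @` S) <= ereal_inf (g @` S))%E.
Proof.
apply: le_ereal_inf_tmp => _ [i Si <-].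
by apply: ge_ereal_inf; exists (f i); [exists i | exact: fg].
Qed.

End ereal_image_bounds.

Section ratio_perturbation.
Variable R : realFieldType.

Lemma div_sub_le_div_larger_denom (x b p e : R) : 0 < b -> b <= p ->
  p <= b + e * b -> x <= p -> x / b - e <= x / p.
Proof.
move=> b0 bp pbe xp; have p0 : 0 < p by exact: lt_le_trans bp.
have -> : x / b - e = x / p + (x * (p - b) - e * b * p) / (b * p).
  by field; rewrite !gt_eqF.
rewrite gerDl pmulr_lle0 ?invr_gt0 ?mulr_gt0 //; nra.
Qed.

Lemma div_le_div_smaller_denom_add (x b p u e : R) :
  0 < b -> b <= p -> p <= u -> u - p <= e * b -> x <= u -> x / p <= x / u + e.
Proof.
move=> b0 bp pu upe xu; have p0 : 0 < p by exact: lt_le_trans bp.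
have u0 : 0 < u by exact: lt_le_trans pu.
have -> : x / p = x / u + e + (x * (u - p) - e * p * u) / (p * u).
  by field; rewrite !gt_eqF.
have e0 : 0 <= e by rewrite -(pmulr_lge0 _ b0); lra.
have : 0 <= e * u * (p - b) by rewrite mulr_ge0 ?mulr_ge0 ?subr_ge0 // ltW.
rewrite gerDl pmulr_lle0 ?invr_gt0 ?mulr_gt0 //; nra.
Qed.

End ratio_perturbation.

Section real_probability.
Variables (d : measure_display) (T : measurableType d) (R : realType).
Variable P : probability T R.

Definition pr (X : set T) : R := fine (P X).

Definition cond_pr (A B : set T) : R := pr (A `&` B) / pr B.

Lemma prE X : measurable X -> (pr X)%:E = P X.
Proof. by move=> mX; rewrite /pr fineK // fin_num_measure. Qed.

Lemma pr_le X Y : measurable X -> measurable Y -> X `<=` Y -> pr X <= pr Y.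
Proof. by move=> mX mY XY; rewrite -lee_fin !prE // le_measure ?inE. Qed.

Lemma pr_setC X : measurable X -> pr (~` X) = 1 - pr X.
Proof. by move=> mX; rewrite /pr probability_setC // -(prE mX) -EFinB. Qed.

Lemma pr_setIC A B : measurable A -> measurable B ->
  pr (~` A `&` B) = pr B - pr (A `&` B).
Proof.
move=> mA mB; apply: EFin_inj.
have mAB : measurable (A `&` B) by exact: measurableI.
have mAcB : measurable (~` A `&` B).
  by apply: measurableI => //; exact: measurableC.
rewrite EFinB !prE // (measureDI P mB mA) setDE setIC [B `&` A]setIC addeK //.
by rewrite fin_num_measure.
Qed.

Lemma cond_prC A B : measurable A -> measurable B -> 0 < pr B ->
  cond_pr (~` A) B = 1 - cond_pr A B.
Proof.
move=> mA mB pB0; rewrite /cond_pr pr_setIC //.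
by field; rewrite gt_eqF.
Qed.

End real_probability.

Section lower_envelope.
Variables (R : realType) (T : ptopologicalType) (Plow : set (Borel T) -> R).
Hypothesis PlowE : forall X : set (Borel T), measurable X ->
  (Plow X)%:E = ereal_inf [set P X | P in core Plow].

Lemma lower_le_core P X : core Plow P -> measurable X -> Plow X <= pr P X.
Proof. by move=> cP mX; rewrite -lee_fin prE //; exact: cP. Qed.

Lemma core_le_upper P X : core Plow P -> measurable X -> pr P X <= upper Plow X.
Proof.
move=> cP mX; rewrite /upper.
by have := lower_le_core cP (measurableC mX); rewrite pr_setC //; lra.
Qed.

Lemma exists_core_lt_lower X e : measurable X -> 0 < e ->
  exists2 P, core Plow P & pr P X < Plow X + e.
Proof.
move=> mX e0.
have Xfin : ereal_inf [set P X | P in core Plow] \is a fin_num.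
  by rewrite -PlowE.
have [_ [P cP <-] PXe] := lb_ereal_inf_adherent e0 Xfin.
by exists P => //; rewrite -lte_fin prE // EFinD PlowE.
Qed.

Lemma exists_core_gt_upper X e : measurable X -> 0 < e ->
  exists2 P, core Plow P & upper Plow X - e < pr P X.
Proof.
move=> mX e0; have [P cP PXe] := exists_core_lt_lower (measurableC mX) e0.
by exists P => //; move: PXe; rewrite pr_setC // /upper; lra.
Qed.

Lemma lower_le_upper X : measurable X -> Plow X <= upper Plow X.
Proof.
move=> mX; have [P cP _] := exists_core_lt_lower mX ltr01.
exact: le_trans (lower_le_core cP mX) (core_le_upper cP mX).
Qed.

Lemma le_lower X Y : measurable X -> measurable Y -> X `<=` Y ->
  Plow X <= Plow Y.
Proof.
move=> mX mY XY; rewrite -lee_fin !PlowE //.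
apply: le_ereal_inf_tmp => _ [P cP <-].
by apply: ge_ereal_inf; exists (P X); [exists P | rewrite le_measure ?inE].
Qed.

Lemma le_upper X Y : measurable X -> measurable Y -> X `<=` Y ->
  upper Plow X <= upper Plow Y.
Proof.
move=> mX mY XY; have mXc := measurableC mX; have mYc := measurableC mY.
by rewrite /upper lerB // le_lower //; exact: subsetC.
Qed.

Section pointwise_bounds.
Variables (P : probability (Borel T) R) (A B : set (Borel T)) (e : R).
Hypotheses (cP : core Plow P) (mA : measurable A) (mB : measurable B).
Hypothesis B_pos : 0 < Plow B.

Let mAB : measurable (A `&` B). Proof. exact: measurableI. Qed.
Let pB_ge : Plow B <= pr P B. Proof. exact: lower_le_core. Qed.
Let pB_gt0 : 0 < pr P B. Proof. exact: lt_le_trans pB_ge. Qed.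

Lemma lowerGeometric_le_cond_pr : pr P B <= Plow B + e * Plow B ->
  lowerGeometric Plow A B - e <= cond_pr P A B.
Proof.
move=> pBe; have lower_AB := lower_le_core cP mAB.
have L_le_pB := le_trans lower_AB (pr_le P mAB mB (@subIsetr _ A B)).
apply: le_trans (div_sub_le_div_larger_denom B_pos pB_ge pBe L_le_pB) _.
by rewrite ler_pM2r ?invr_gt0.
Qed.

Lemma cond_pr_le_upperDempster : upper Plow B - e * Plow B <= pr P B ->
  cond_pr P A B <= upperDempster Plow A B + e.
Proof.
move=> pBe; have pB_le := core_le_upper cP mB.
have upper_AB := le_upper mAB mB (@subIsetr _ A B).
have pBe' : upper Plow B - pr P B <= e * Plow B by lra.
apply: le_trans (div_le_div_smaller_denom_add B_pos pB_ge pB_le pBe' upper_AB).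
by rewrite ler_pM2r ?invr_gt0 // core_le_upper.
Qed.

End pointwise_bounds.

Section dual_pointwise_bounds.
Variables (P : probability (Borel T) R) (A B : set (Borel T)) (e : R).
Hypotheses (cP : core Plow P) (mA : measurable A) (mB : measurable B).
Hypothesis B_pos : 0 < Plow B.

Let cond_prC_A : cond_pr P (~` A) B = 1 - cond_pr P A B.
Proof. by apply: cond_prC => //; exact: lt_le_trans (lower_le_core cP mB). Qed.

Lemma cond_pr_le_upperGeometric : pr P B <= Plow B + e * Plow B ->
  cond_pr P A B <= upperGeometric Plow A B + e.
Proof.
move=> pBe; have := lowerGeometric_le_cond_pr cP (measurableC mA) mB B_pos pBe.
by rewrite cond_prC_A /upperGeometric; lra.
Qed.

Lemma lowerDempster_le_cond_pr : upper Plow B - e * Plow B <= pr P B ->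
  lowerDempster Plow A B - e <= cond_pr P A B.
Proof.
move=> pBe; have := cond_pr_le_upperDempster cP (measurableC mA) mB B_pos pBe.
by rewrite cond_prC_A /lowerDempster; lra.
Qed.

End dual_pointwise_bounds.

Lemma lowerBayes_le A B x :
  (forall e, 0 < e -> exists2 P, core Plow P & cond_pr P A B <= x + e) ->
  (lowerBayes Plow A B <= x%:E)%E.
Proof.
move=> near_x; apply/lee_addgt0Pr => e /near_x[P cP Pxe].
apply: ge_ereal_inf; exists (cond_pr P A B)%:E; first by exists P.
by rewrite -EFinD lee_fin.
Qed.

Lemma upperBayes_ge A B x :
  (forall e, 0 < e -> exists2 P, core Plow P & x - e <= cond_pr P A B) ->
  (x%:E <= upperBayes Plow A B)%E.
Proof.
move=> near_x; apply/lee_subgt0Pr => e /near_x[P cP Pxe].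
apply: le_ereal_sup_tmp; exists (cond_pr P A B)%:E; first by exists P.
by rewrite -EFinB lee_fin.
Qed.

Section Bayes_bounds.
Variables (A B : set (Borel T)).
Hypotheses (mA : measurable A) (mB : measurable B) (B_pos : 0 < Plow B).

Let exists_core_near_lower e : 0 < e ->
  exists2 P, core Plow P & pr P B <= Plow B + e * Plow B.
Proof.
move=> e0; have [P cP /ltW] := exists_core_lt_lower mB (mulr_gt0 e0 B_pos).
by exists P.
Qed.

Let exists_core_near_upper e : 0 < e ->
  exists2 P, core Plow P & upper Plow B - e * Plow B <= pr P B.
Proof.
move=> e0; have [P cP /ltW] := exists_core_gt_upper mB (mulr_gt0 e0 B_pos).
by exists P.
Qed.

Lemma lowerBayes_le_upperGeometric :
  (lowerBayes Plow A B <= (upperGeometric Plow A B)%:E)%E.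
Proof.
apply: lowerBayes_le => e /exists_core_near_lower[P cP pBe].
by exists P => //; exact: cond_pr_le_upperGeometric.
Qed.

Lemma lowerBayes_le_upperDempster :
  (lowerBayes Plow A B <= (upperDempster Plow A B)%:E)%E.
Proof.
apply: lowerBayes_le => e /exists_core_near_upper[P cP pBe].
by exists P => //; exact: cond_pr_le_upperDempster.
Qed.

Lemma lowerGeometric_le_upperBayes :
  ((lowerGeometric Plow A B)%:E <= upperBayes Plow A B)%E.
Proof.
apply: upperBayes_ge => e /exists_core_near_lower[P cP pBe].
by exists P => //; exact: lowerGeometric_le_cond_pr.
Qed.

Lemma lowerDempster_le_upperBayes :
  ((lowerDempster Plow A B)%:E <= upperBayes Plow A B)%E.
Proof.
apply: upperBayes_ge => e /exists_core_near_upper[P cP pBe].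
by exists P => //; exact: lowerDempster_le_cond_pr.
Qed.

End Bayes_bounds.

End lower_envelope.

Theorem corollary5p5 (R : realType) (T : ptopologicalType)
  (Plow : set (Borel T) -> R) (Bs : set (set (Borel T))) (A : set (Borel T)) :
  separable_space T -> completely_metrizable R T ->
  choquet2 Plow ->
  measurable_partition Bs ->
  (forall B, Bs B -> 0 < Plow B) ->
  measurable A ->
  ((ereal_inf [set (lowerDempster Plow A B)%:E | B in Bs] > (upper Plow A)%:E /\
    ereal_sup [set (upperGeometric Plow A B)%:E | B in Bs] < (Plow A)%:E) \/
   (ereal_inf [set (lowerGeometric Plow A B)%:E | B in Bs] > (upper Plow A)%:E /\
    ereal_sup [set (upperDempster Plow A B)%:E | B in Bs] < (Plow A)%:E))%E ->
  (ereal_sup [set lowerBayes Plow A B | B in Bs] < (Plow A)%:E /\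
   (Plow A <= upper Plow A)%R /\
   (upper Plow A)%:E < ereal_inf [set upperBayes Plow A B | B in Bs])%E.
Proof.
move=> _ _ [PlowE _ _] [mBs _ _] B_pos mA hyp.
split; [|split; first exact: (lower_le_upper PlowE)].
- case: hyp => -[_ sup_lt]; apply: le_lt_trans sup_lt;
    apply: ereal_sup_image_le => B Bs_B.
  + exact: (lowerBayes_le_upperGeometric PlowE mA (mBs B Bs_B) (B_pos B Bs_B)).
  + exact: (lowerBayes_le_upperDempster PlowE mA (mBs B Bs_B) (B_pos B Bs_B)).
- case: hyp => -[inf_gt _]; apply: lt_le_trans inf_gt _;
    apply: ereal_inf_image_le => B Bs_B.
  + exact: (lowerDempster_le_upperBayes PlowE mA (mBs B Bs_B) (B_pos B Bs_B)).
  + exact: (lowerGeometric_le_upperBayes PlowE mA (mBs B Bs_B) (B_pos B Bs_B)).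
Qed.
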